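(* For integers $n,m$, the inequality \[ 4\,\operatorname{arccosh}\!\left(\frac{\cos(\pi/m)}{\sin(\pi/n)}\right) > 2\log n \] holds whenever $n\ge4, m\ge8$; or $n\ge 6, m\ge 5$; or $n\ge 8, m\ge 4$; or $n\ge 12, m\ge 3$. *)

From Stdlib Require Import Reals.
Open Scope R_scope.

Definition arccosh (x : R) : R := ln (x + sqrt (x ^ 2 - 1)).

(* Write x = cos(pi/m) / sin(pi/n).  As cosh (ln (sqrt n)) = (n + 1) / (2 sqrt n),
   the inequality amounts to (n + 1)^2 < 4 n x^2.  Bounding sin(pi/n) < pi/n,
   pi < 22/7 and cos(pi/m) from below by its Taylor polynomial of degree 6
   gives x >= c n / pi with c depending only on a lower bound m0 for m; since
   n^3 / (n + 1)^2 increases with n, each of the four ranges reduces to one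
   numerical inequality at its corner (n0, m0).  The corner n = 4 is too tight
   for sin x < x and uses sin(pi/4) = 1/sqrt 2 instead. *)

From Stdlib Require Import Reals Lra Lia.
Open Scope R_scope.

Lemma ln_lt_arccosh (s x : R) : 0 < s -> s ^ 2 + 1 < 2 * s * x -> ln s < arccosh x.
Proof.
  intros hs hsx.
  apply ln_increasing; [exact hs|].
  destruct (Rlt_le_dec s x) as [hlt|hle].
  - pose proof (sqrt_pos (x ^ 2 - 1)). lra.
  - assert (hsq : s - x < sqrt (x ^ 2 - 1)).
    { rewrite <- (sqrt_pow2 (s - x)) by lra. apply sqrt_lt_1_alt. nra. }
    lra.
Qed.

Lemma two_ln_lt_four_arccosh (N x : R) :
  0 < N -> 0 <= x -> (N + 1) ^ 2 < 4 * N * x ^ 2 -> 2 * ln N < 4 * arccosh x.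
Proof.
  intros hN hx hNx.
  set (s := sqrt N).
  assert (hs : 0 < s) by (apply sqrt_lt_R0; exact hN).
  assert (hs2 : s ^ 2 = N) by (apply pow2_sqrt; lra).
  assert (hsx : s ^ 2 + 1 < 2 * s * x).
  { rewrite hs2. apply Rsqr_incrst_0; unfold Rsqr; nra. }
  rewrite <- hs2, ln_pow by exact hs.
  pose proof (ln_lt_arccosh s x hs hsx). simpl. lra.
Qed.

Definition cos_taylor6 (x : R) : R := 1 - x ^ 2 / 2 + x ^ 4 / 24 - x ^ 6 / 720.

Lemma cos_taylor6_le_cos (x : R) : - PI / 2 <= x <= PI / 2 -> cos_taylor6 x <= cos x.
Proof.
  intros [hl hu].
  destruct (cos_bound x 1 hl hu) as [H _].
  unfold cos_approx, cos_term in H. simpl in H.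
  unfold cos_taylor6. lra.
Qed.

(* Three terms of the series for pi/4 = 2 atan(1/3) + atan(1/7). *)
Lemma PI_lt_22_7 : PI < 22 / 7.
Proof.
  destruct (PI_2_3_7_ineq 1) as [_ H].
  unfold tg_alt, PI_2_3_7_tg, Ratan_seq in H; simpl in H.
  lra.
Qed.

Lemma cos_taylor6_le_cos_PI_div (m : nat) (M0 : R) :
  3 <= M0 <= INR m -> cos_taylor6 (22 / 7 / M0) <= cos (PI / INR m).
Proof.
  intros [hM0 hM0m].
  pose proof PI_lt_22_7. pose proof PI_RGT_0. pose proof PI2_3_2.
  assert (hle : PI / INR m <= 22 / 7 / M0).
  { unfold Rdiv. apply Rmult_le_compat; try lra.
    - apply Rlt_le, Rinv_0_lt_compat; lra.
    - apply Rinv_le_contravar; lra. }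
  assert (hpos : 0 < PI / INR m) by (apply Rdiv_lt_0_compat; lra).
  assert (hy : 22 / 7 / M0 <= 22 / 21).
  { apply Rmult_le_reg_r with M0; [lra|]. field_simplify; lra. }
  apply Rle_trans with (cos (22 / 7 / M0)).
  - apply cos_taylor6_le_cos; lra.
  - apply cos_decr_1; lra.
Qed.

Lemma cos_taylor6_nonneg (x : R) : 0 <= x <= 22 / 21 -> 0 <= cos_taylor6 x.
Proof.
  intros hx. unfold cos_taylor6.
  assert (hx2 : x ^ 2 <= 2) by nra.
  assert (0 <= x ^ 4 * (30 - x ^ 2)) by (apply Rmult_le_pos; nra).
  lra.
Qed.

Lemma cos_div_sin_PI_div_ge (n m : nat) (c : R) :
  2 <= INR n -> 0 <= c <= cos (PI / INR m) ->
  c * INR n / PI <= cos (PI / INR m) / sin (PI / INR n).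
Proof.
  intros hn [hc0 hc].
  pose proof PI_RGT_0.
  set (a := PI / INR n).
  assert (ha : 0 < a) by (apply Rdiv_lt_0_compat; lra).
  assert (haPI : a < PI).
  { unfold a. apply Rmult_lt_reg_r with (INR n); [lra|]. field_simplify; nra. }
  assert (hsin : 0 < sin a) by (apply sin_gt_0; lra).
  assert (hsin_a : sin a < a) by (apply sin_lt_x; exact ha).
  replace (c * INR n / PI) with (c / a) by (unfold a; field; lra).
  unfold Rdiv. apply Rmult_le_compat; try lra.
  - apply Rlt_le, Rinv_0_lt_compat; lra.
  - apply Rinv_le_contravar; lra.
Qed.

Lemma cube_mul_succ_sq_le (N0 N : R) :
  0 < N0 <= N -> N0 ^ 3 * (N + 1) ^ 2 <= N ^ 3 * (N0 + 1) ^ 2.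
Proof.
  intros [hN0 hN].
  assert (hprod : 0 <= N0 * (N + 1) <= N * (N0 + 1)) by nra.
  assert (hsq : (N0 * (N + 1)) ^ 2 <= (N * (N0 + 1)) ^ 2) by (apply pow_incr; exact hprod).
  replace (N0 ^ 3 * (N + 1) ^ 2) with (N0 * (N0 * (N + 1)) ^ 2) by ring.
  replace (N ^ 3 * (N0 + 1) ^ 2) with (N * (N * (N0 + 1)) ^ 2) by ring.
  apply Rmult_le_compat; try lra. apply pow2_ge_0.
Qed.

Lemma proposition1_of_cos_lb (n m : nat) (N0 c : R) :
  2 <= N0 <= INR n -> 0 <= c <= cos (PI / INR m) ->
  (22 / 7) ^ 2 * (N0 + 1) ^ 2 < 4 * c ^ 2 * N0 ^ 3 ->
  4 * arccosh (cos (PI / INR m) / sin (PI / INR n)) > 2 * ln (INR n).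
Proof.
  intros [hN0 hN0n] hc hcN0.
  pose proof PI_RGT_0. pose proof PI_lt_22_7.
  assert (hX := cos_div_sin_PI_div_ge n m c ltac:(lra) hc).
  set (N := INR n) in *.
  set (X := cos (PI / INR m) / sin (PI / N)) in *.
  set (Y := c * N / PI) in *.
  assert (hY : 0 <= Y) by (unfold Y; apply Rmult_le_pos; [nra | apply Rlt_le, Rinv_0_lt_compat; lra]).
  assert (hYX : Y ^ 2 <= X ^ 2) by (apply pow_incr; lra).
  assert (hmono := cube_mul_succ_sq_le N0 N ltac:(lra)).
  assert (hPI2 : PI ^ 2 < (22 / 7) ^ 2) by nra.
  assert (hcN : PI ^ 2 * (N + 1) ^ 2 < 4 * c ^ 2 * N ^ 3).
  { assert (hN1 : 0 < (N0 + 1) ^ 2) by (apply pow_lt; lra).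
    apply Rmult_lt_reg_r with ((N0 + 1) ^ 2); [exact hN1|].
    assert (hN2 : 0 < (N + 1) ^ 2) by (apply pow_lt; lra).
    assert (hc2 : 0 <= c ^ 2) by (apply pow2_ge_0).
    assert (PI ^ 2 * ((N0 + 1) ^ 2 * (N + 1) ^ 2) < (22 / 7) ^ 2 * ((N0 + 1) ^ 2 * (N + 1) ^ 2))
      by (apply Rmult_lt_compat_r; [apply Rmult_lt_0_compat|]; lra).
    assert ((22 / 7) ^ 2 * (N0 + 1) ^ 2 * (N + 1) ^ 2 < 4 * c ^ 2 * N0 ^ 3 * (N + 1) ^ 2)
      by (apply Rmult_lt_compat_r; lra).
    assert (4 * c ^ 2 * (N0 ^ 3 * (N + 1) ^ 2) <= 4 * c ^ 2 * (N ^ 3 * (N0 + 1) ^ 2))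
      by (apply Rmult_le_compat_l; lra).
    lra. }
  assert (hYN : PI ^ 2 * (4 * N * Y ^ 2) = 4 * c ^ 2 * N ^ 3) by (unfold Y; field; lra).
  apply two_ln_lt_four_arccosh; [lra | lra |].
  assert (hNY : (N + 1) ^ 2 < 4 * N * Y ^ 2)
    by (apply Rmult_lt_reg_l with (PI ^ 2); [apply pow_lt|]; lra).
  assert (4 * N * Y ^ 2 <= 4 * N * X ^ 2) by (apply Rmult_le_compat_l; lra).
  lra.
Qed.

Lemma proposition1_of_bounds (n m n0 m0 : nat) :
  (2 <= n0 <= n)%nat -> (3 <= m0 <= m)%nat ->
  (22 / 7) ^ 2 * (INR n0 + 1) ^ 2 < 4 * cos_taylor6 (22 / 7 / INR m0) ^ 2 * INR n0 ^ 3 ->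
  4 * arccosh (cos (PI / INR m) / sin (PI / INR n)) > 2 * ln (INR n).
Proof.
  intros hn hm hnum.
  assert (hn0 : 2 <= INR n0 <= INR n).
  { split; [replace 2 with (INR 2) by (simpl; lra)|]; apply le_INR; lia. }
  assert (hm0 : 3 <= INR m0 <= INR m).
  { split; [replace 3 with (INR 3) by (simpl; lra)|]; apply le_INR; lia. }
  apply (proposition1_of_cos_lb n m (INR n0) (cos_taylor6 (22 / 7 / INR m0))); [exact hn0| |exact hnum].
  split.
  - apply cos_taylor6_nonneg. split.
    + apply Rlt_le, Rdiv_lt_0_compat; lra.
    + apply Rmult_le_reg_r with (INR m0); [lra|]. field_simplify; lra.
  - apply cos_taylor6_le_cos_PI_div; exact hm0.
Qed.

Lemma proposition1_n4 (m : nat) :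
  (8 <= m)%nat -> 4 * arccosh (cos (PI / INR m) / sin (PI / INR 4)) > 2 * ln (INR 4).
Proof.
  intros hm.
  assert (hm8 : 8 <= INR m) by (replace 8 with (INR 8) by (simpl; lra); apply le_INR; exact hm).
  assert (hc := cos_taylor6_le_cos_PI_div m 8 ltac:(lra)).
  unfold cos_taylor6 in hc.
  replace (INR 4) with 4 by (simpl; lra).
  set (c := cos (PI / INR m)) in *.
  assert (h2 : sqrt 2 ^ 2 = 2) by (apply pow2_sqrt; lra).
  assert (hs : 0 < sqrt 2) by (apply sqrt_lt_R0; lra).
  rewrite sin_PI4.
  replace (c / (1 / sqrt 2)) with (c * sqrt 2) by (field; lra).
  apply two_ln_lt_four_arccosh; [lra | nra |].
  rewrite Rpow_mult_distr, h2. nra.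
Qed.

Theorem proposition1 (n m : nat) :
  ((4 <= n)%nat /\ (8 <= m)%nat) \/ ((6 <= n)%nat /\ (5 <= m)%nat) \/
  ((8 <= n)%nat /\ (4 <= m)%nat) \/ ((12 <= n)%nat /\ (3 <= m)%nat) ->
  4 * arccosh (cos (PI / INR m) / sin (PI / INR n)) > 2 * ln (INR n).
Proof.
  intros [[hn hm]|[[hn hm]|[[hn hm]|[hn hm]]]].
  - destruct (Nat.eq_dec n 4) as [->|hn4]; [exact (proposition1_n4 m hm)|].
    apply (proposition1_of_bounds n m 5 8); [lia | lia | simpl; unfold cos_taylor6; lra].
  - apply (proposition1_of_bounds n m 6 5); [lia | lia | simpl; unfold cos_taylor6; lra].
  - apply (proposition1_of_bounds n m 8 4); [lia | lia | simpl; unfold cos_taylor6; lra].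
  - apply (proposition1_of_bounds n m 12 3); [lia | lia | simpl; unfold cos_taylor6; lra].
Qed.
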